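(* Let $f$ be an affine signal flow graph with initial state $f_0$. For every finite computation $t\vdash f_0\xrightarrow[v_t]{u_t}f_1\xrightarrow[v_{t+1}]{u_{t+1}}\cdots\xrightarrow[v_{t+n-1}]{u_{t+n-1}}f_n$ (starting at time $t\le 0$) there exists a trajectory $\sigma\in[\![f]\!]_{op}$ such that $\sigma(i)=(u_i,v_i)$ for all $t\le i\le t+n-1$.
   Context: Fix a field $k$. Circuits: terms built from generators with sorts $(n,m)$: copier $\Delta:(1,2)$, discard $!:(1,0)$, amplifier $\mathsf{s}_r:(1,1)$ ($r\in k$), register $\mathsf{x}:(1,1)$, adder $+:(2,1)$, zero $0:(0,1)$, one $\mathbf{1}:(0,1)$; mirror images $\Delta^{op}:(2,1)$, $!^{op}:(0,1)$, $\mathsf{s}_r^{op}$, $\mathsf{x}^{op}:(1,1)$, $+^{op}:(1,2)$, $0^{op}:(1,0)$, $\mathbf{1}^{op}:(1,0)$; $\mathrm{id}_0:(0,0),\mathrm{id}_1:(1,1),\mathrm{sw}:(2,2)$; closed under $;$ and $\oplus$. Feedback: for $c:(n+1,m+1)$, $\mathrm{Tr}(c):(n,m)$ connects the last right port of $c$ to its last left port through a register $\mathsf x$, the wire being bent with the cup $!^{op};\Delta:(0,2)$ and the cap $\Delta^{op};!:(2,0)$. Affine signal flow graphs are the circuits in the smallest class containing $\Delta,!,\mathsf s_r,\mathsf x,+,0,\mathbf 1,\mathrm{id}_0,\mathrm{id}_1,\mathrm{sw}$ and closed under $;$, $\oplus$ and $\mathrm{Tr}$. Operational semantics: a state is a circuit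 with a value of $k$ in each register; initial state stores $0$ everywhere. Transitions $t\vdash c\xrightarrow[w]{v}c'$ at time $t\in\mathbb Z$ (moving to time $t+1$): $\Delta$: $a/(a,a)$; $!$: $a/\bullet$; $+$: $(a,b)/a+b$; $0$: $\bullet/0$; $\mathsf s_r$: $a/ra$; $\mathsf x$ storing $b$: $a/b$, then stores $a$; $\mathbf 1$: $\bullet/1$ if $t=0$, $\bullet/0$ otherwise; mirrored generators: same with left/right exchanged; $\mathrm{id}_1$: $a/a$; $\mathrm{sw}$: $(a,b)/(b,a)$; $\mathrm{id}_0$: $\bullet/\bullet$; in $c;d$ both components move at the same time agreeing on the shared middle label; in $c\oplus d$ both move with labels concatenated. A computation starting at $t\le0$ is a sequence of transitions from the initial state at times $t,t+1,\dots$. An $(n,m)$-trajectory is $\sigma:\mathbb Z\to k^n\times k^m$ equal to $(0,0)$ at all sufficiently small indices. $[\![f]\!]_{op}$ is the set of trajectories of infinite computations of $f$: $\sigma(i)=(u_i,v_i)$ (the labels of the transition at time $i$) for $i\ge t$, and $(0,0)$ for $i<t$. *)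

From mathcomp Require Import all_boot all_algebra.
Set Implicit Arguments. Unset Strict Implicit. Unset Printing Implicit Defensive.
Import GRing.Theory Num.Theory.
Local Open Scope ring_scope.

Section Circuits.
Variable k : fieldType.

(* Circuit terms.  A register carries its current contents, so a term is also
   a state; [init] puts 0 in every register. *)
Inductive circ : Type :=
| Copy | Disc | Amp of k | Reg of k | Add | Zero | One
| CopyOp | DiscOp | AmpOp of k | RegOp of k | AddOp | ZeroOp | OneOp
| Id0 | Id1 | Sw
| Seq of circ & circ
| Par of circ & circ.

Fixpoint init (c : circ) : circ :=
  match c with
  | Reg _ => Reg 0
  | RegOp _ => RegOp 0
  | Seq c d => Seq (init c) (init d)
  | Par c d => Par (init c) (init d)
  | c => c
  end.

Fixpoint idn (n : nat) : circ :=
  match n with 0 => Id0 | n'.+1 => Par (idn n') Id1 end.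

Definition cup : circ := Seq DiscOp Copy.
Definition cap : circ := Seq CopyOp Disc.

(* Feedback of c : (n+1, m+1), through a register. *)
Definition Tr (n m : nat) (c : circ) : circ :=
  Seq (Seq (Seq (Par (idn n) cup) (Par c Id1))
           (Par (Par (idn m) (Reg 0)) Id1))
      (Par (idn m) cap).

Inductive asfg : circ -> nat -> nat -> Prop :=
| asfg_copy : asfg Copy 1 2
| asfg_disc : asfg Disc 1 0
| asfg_amp r : asfg (Amp r) 1 1
| asfg_reg : asfg (Reg 0) 1 1
| asfg_add : asfg Add 2 1
| asfg_zero : asfg Zero 0 1
| asfg_one : asfg One 0 1
| asfg_id0 : asfg Id0 0 0
| asfg_id1 : asfg Id1 1 1
| asfg_sw : asfg Sw 2 2
| asfg_seq c d n l m : asfg c n l -> asfg d l m -> asfg (Seq c d) n m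
| asfg_par c d n1 m1 n2 m2 : asfg c n1 m1 -> asfg d n2 m2 ->
    asfg (Par c d) (n1 + n2) (m1 + m2)
| asfg_tr c n m : asfg c n.+1 m.+1 -> asfg (Tr n m c) n m.

(* Transitions  t |- c --u/v--> c'  (u: left labels, v: right labels). *)
Inductive step (t : int) : circ -> seq k -> seq k -> circ -> Prop :=
| st_copy a : step t Copy [:: a] [:: a; a] Copy
| st_disc a : step t Disc [:: a] [::] Disc
| st_add a b : step t Add [:: a; b] [:: a + b] Add
| st_zero : step t Zero [::] [:: 0] Zero
| st_amp r a : step t (Amp r) [:: a] [:: r * a] (Amp r)
| st_reg a b : step t (Reg b) [:: a] [:: b] (Reg a)
| st_one : step t One [::] [:: if t == 0 then 1 else 0] One
| st_copyop a : step t CopyOp [:: a; a] [:: a] CopyOp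
| st_discop a : step t DiscOp [::] [:: a] DiscOp
| st_addop a b : step t AddOp [:: a + b] [:: a; b] AddOp
| st_zeroop : step t ZeroOp [:: 0] [::] ZeroOp
| st_ampop r a : step t (AmpOp r) [:: r * a] [:: a] (AmpOp r)
| st_regop a b : step t (RegOp b) [:: b] [:: a] (RegOp a)
| st_oneop : step t OneOp [:: if t == 0 then 1 else 0] [::] OneOp
| st_id1 a : step t Id1 [:: a] [:: a] Id1
| st_sw a b : step t Sw [:: a; b] [:: b; a] Sw
| st_id0 : step t Id0 [::] [::] Id0
| st_seq c c' d d' u w v :
    step t c u w c' -> step t d w v d' -> step t (Seq c d) u v (Seq c' d')
| st_par c c' d d' u1 v1 u2 v2 :
    step t c u1 v1 c' -> step t d u2 v2 d' ->
    step t (Par c d) (u1 ++ u2) (v1 ++ v2) (Par c' d').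

Definition fin_comp (f : circ) (t : int) (len : nat)
  (s : int -> circ) (u v : int -> seq k) : Prop :=
  (t <= 0) /\ s t = init f /\
  forall i : int, t <= i -> i < t + len%:Z -> step i (s i) (u i) (v i) (s (i + 1)).

Definition inf_comp (f : circ) (t : int)
  (s : int -> circ) (u v : int -> seq k) : Prop :=
  (t <= 0) /\ s t = init f /\
  forall i : int, t <= i -> step i (s i) (u i) (v i) (s (i + 1)).

Definition zeros (n : nat) : seq k := nseq n 0.

Definition trajectory (n m : nat) (sigma : int -> seq k * seq k) : Prop :=
  (forall i, size (sigma i).1 = n /\ size (sigma i).2 = m) /\
  exists N : int, forall i, i <= N -> sigma i = (zeros n, zeros m).

Definition op_sem (n m : nat) (f : circ) (sigma : int -> seq k * seq k) : Prop :=
  trajectory n m sigma /\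
  exists t s u v, inf_comp f t s u v /\
    forall i : int, (t <= i -> sigma i = (u i, v i)) /\
                    (i < t -> sigma i = (zeros n, zeros m)).

End Circuits.

(* A state reachable from the initial state of an affine signal flow graph
   [f : (n, m)] differs from [f] only in its register contents, and such a state
   can react to every input vector of length [n]: the only constraints of the
   semantics come from mirrored generators, which occur only in the cup and cap
   of feedback loops, and the cap is satisfied by letting the cup emit the
   current content of the loop's register.  Hence any finite computation can
   be continued forever, say with zero inputs, and padding the resulting
   infinite computation with zeros before its start gives a trajectory of
   [[f]]_op extending it. *)

From mathcomp Require Import all_boot all_order all_algebra zify.
From Stdlib Require Import ClassicalEpsilon.
Set Implicit Arguments. Unset Strict Implicit. Unset Printing Implicit Defensive.
Import Order.Theory GRing.Theory Num.Theory.
Local Open Scope ring_scope.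

Arguments Id1 {k}. Arguments cup {k}. Arguments cap {k}.

Section Sorts.
Variable k : fieldType.

Fixpoint circ_sort (c : circ k) : option (nat * nat) :=
  match c with
  | Copy => Some (1, 2) | Disc => Some (1, 0) | Add => Some (2, 1)
  | Zero | One => Some (0, 1) | Amp _ | Reg _ => Some (1, 1)
  | CopyOp => Some (2, 1) | DiscOp => Some (0, 1) | AddOp => Some (1, 2)
  | ZeroOp | OneOp => Some (1, 0) | AmpOp _ | RegOp _ => Some (1, 1)
  | Id0 => Some (0, 0) | Id1 => Some (1, 1) | Sw => Some (2, 2)
  | Seq c d =>
      if (circ_sort c, circ_sort d) is (Some (n, l), Some (l', m))
      then if l == l' then Some (n, m) else None else None
  | Par c d =>
      if (circ_sort c, circ_sort d) is (Some (n1, m1), Some (n2, m2))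
      then Some (n1 + n2, m1 + m2) else None
  end%N.

Lemma circ_sort_init c : circ_sort (init c) = circ_sort c.
Proof. by elim: c => //= c -> d ->. Qed.

Lemma circ_sort_idn n : circ_sort (idn k n) = Some (n, n).
Proof. by elim: n => //= n ->; rewrite addn1. Qed.

Lemma asfg_circ_sort f n m : asfg f n m -> circ_sort f = Some (n, m).
Proof.
elim=> //= [c d {}n l {}m _ -> _ -> | c d n1 m1 n2 m2 _ -> _ -> // | c {}n {}m _ IH].
  by rewrite eqxx.
by rewrite !circ_sort_idn IH /= !addn0 !addn1 !addn2 !eqxx.
Qed.

Lemma circ_sort_step t c u v c' :
  step t c u v c' -> circ_sort c = Some (size u, size v).
Proof.
elim=> [||||||||||||||||| c1 c1' d1 d1' u1 w v1 _ IHc _ IHd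
       | c1 c1' d1 d1' u1 v1 u2 v2 _ IHc _ IHd] //=.
- by rewrite IHc IHd eqxx.
by rewrite IHc IHd !size_cat.
Qed.

End Sorts.

Section Steps.
Variable k : fieldType.
Implicit Types (c f : circ k) (t : int) (u v w : seq k).

Lemma asfg_step_size f n m c t u v c' :
  asfg f n m -> init c = f -> step t c u v c' -> size u = n /\ size v = m.
Proof.
move=> /asfg_circ_sort sort_f init_c /circ_sort_step.
by rewrite -circ_sort_init init_c sort_f => -[-> ->].
Qed.

Lemma step_init t c u v c' : step t c u v c' -> init c' = init c.
Proof. by elim=> //= *; congruence. Qed.

Fixpoint regfree c : bool :=
  match c with
  | Reg _ | RegOp _ => false
  | Seq c d | Par c d => regfree c && regfree d
  | _ => true
  end.

Lemma regfree_init c : regfree c -> init c = c.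
Proof. by elim: c => //= c IHc d IHd /andP[/IHc -> /IHd ->]. Qed.

Lemma init_eq_regfree c d : regfree d -> init c = d -> c = d.
Proof.
move=> + init_c; rewrite -{}init_c.
by elim: c => //= c IHc d' IHd /andP[/IHc <- /IHd <-].
Qed.

Lemma regfree_idn n : regfree (idn k n).
Proof. by elim: n => //= n ->. Qed.

Lemma asfg_init f n m : asfg f n m -> init f = f.
Proof.
elim=> //= [c d *|c d *|c n' m' _ IH]; try congruence.
by rewrite /Tr /= IH !(regfree_init (regfree_idn _)).
Qed.

Lemma step_idn t n u : size u = n -> step t (idn k n) u u (idn k n).
Proof.
elim: n u => [|n IH] u; first by move/size0nil->; exact: st_id0.
case/lastP: u => [|u a] //; rewrite size_rcons => -[/IH Su].
by rewrite -cats1; apply: st_par Su (st_id1 t a).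
Qed.

(* [Tr n m c] is [Tr_state n m c 0]; [r] is the content of the feedback register. *)
Definition Tr_state n m c (r : k) : circ k :=
  Seq (Seq (Seq (Par (idn k n) cup) (Par c Id1))
           (Par (Par (idn k m) (Reg r)) Id1))
      (Par (idn k m) cap).

Lemma init_eq_Tr n m f c :
  init c = Tr n m f -> exists c1 r, c = Tr_state n m c1 r /\ init c1 = f.
Proof.
have [rf_n rf_m] := (regfree_idn n, regfree_idn m).
have rf_id : regfree (Id1 : circ k) := isT.
have rf_in : regfree (Par (idn k n) cup) by rewrite /= rf_n.
have rf_out : regfree (Par (idn k m) cap) by rewrite /= rf_m.
case: c => // c3 d /= [+ /(init_eq_regfree rf_out) ->].
case: c3 => // c2 b /= [+ E]; case: b E => // b1 i /= [+ /(init_eq_regfree rf_id) ->].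
case: b1 => // b1 rg /= [/(init_eq_regfree rf_m) ->]; case: rg => // r _.
case: c2 => // a c1 /= [/(init_eq_regfree rf_in) ->].
by case: c1 => // c1 i' /= [E1 /(init_eq_regfree rf_id) ->]; exists c1, r.
Qed.

Lemma step_Tr_state t n m c c' u w r b :
  size u = n -> size w = m -> step t c (rcons u r) (rcons w b) c' ->
  step t (Tr_state n m c r) u w (Tr_state n m c' b).
Proof.
move=> Su Sw Sc.
have S1 : step t (Par (idn k n) cup) u (u ++ [:: r; r]) (Par (idn k n) cup).
  by have := st_par (step_idn t Su) (st_seq (st_discop t r) (st_copy t r)); rewrite cats0.
have S2 : step t (Par c Id1) (u ++ [:: r; r]) (rcons w b ++ [:: r]) (Par c' Id1).
  by have := st_par Sc (st_id1 t r); rewrite -cats1 -catA.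
have S3 : step t (Par (Par (idn k m) (Reg r)) Id1) (rcons w b ++ [:: r])
                 ((w ++ [:: r]) ++ [:: r]) (Par (Par (idn k m) (Reg b)) Id1).
  by have := st_par (st_par (step_idn t Sw) (st_reg t b r)) (st_id1 t r); rewrite -cats1.
have S4 : step t (Par (idn k m) cap) ((w ++ [:: r]) ++ [:: r]) w (Par (idn k m) cap).
  by have := st_par (step_idn t Sw) (st_seq (st_copyop t r) (st_disc t r)); rewrite cats0 -catA.
exact: st_seq (st_seq (st_seq S1 S2) S3) S4.
Qed.

Lemma asfg_progress f n m : asfg f n m ->
  forall t c u, init c = f -> size u = n -> exists v c', step t c u v c'.
Proof.
elim=> [||r|||||||| f1 f2 n' l m' asfg1 IH1 _ IH2
       | f1 f2 n1 m1 n2 m2 _ IH1 _ IH2 | f1 n' m' asfg1 IH] t c u.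
all: try by move=> E; rewrite (init_eq_regfree _ E) //;
            case: u => [|a [|b []]] //= _; do 2 eexists; constructor.
- case: c => // r _; case: u => [|a []] // _.
  by do 2 eexists; exact: st_reg.
- case: c => // c1 c2 [E1 E2] Su.
  have [w [c1' S1]] := IH1 t c1 u E1 Su.
  have [_ Sw] := asfg_step_size asfg1 E1 S1.
  have [v [c2' S2]] := IH2 t c2 w E2 Sw.
  by exists v, (Seq c1' c2'); apply: st_seq S1 S2.
- case: c => // c1 c2 [E1 E2] Su.
  have Su1 : size (take n1 u) = n1 by rewrite size_takel // Su leq_addr.
  have Su2 : size (drop n1 u) = n2 by rewrite size_drop Su addKn.
  have [v1 [c1' S1]] := IH1 t c1 _ E1 Su1.
  have [v2 [c2' S2]] := IH2 t c2 _ E2 Su2.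
  by exists (v1 ++ v2), (Par c1' c2'); rewrite -(cat_take_drop n1 u); apply: st_par.
move=> /init_eq_Tr [c1 [r [-> E1]]] Su.
have Sur : size (rcons u r) = n'.+1 by rewrite size_rcons Su.
have [v [c1' S1]] := IH t c1 _ E1 Sur.
have [_] := asfg_step_size asfg1 E1 S1.
case/lastP: v S1 => [|w b] // S1; rewrite size_rcons => -[Sw].
by exists w, (Tr_state n' m' c1' b); apply: step_Tr_state.
Qed.

End Steps.

Section Runs.
Variables (S O : Type) (R : int -> S -> O -> S -> Prop).

Lemma run_forever (P : S -> Prop) (T : int) (c0 : S) :
  (forall i c, P c -> exists o c', P c' /\ R i c o c') -> P c0 ->
  exists (e : int -> S) (w : int -> O),
    e T = c0 /\ forall i, T <= i -> P (e i) /\ R i (e i) (w i) (e (i + 1)).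
Proof.
move=> next P_c0.
have [g Rg] : exists g : int * {c | P c} -> O * {c | P c},
    forall ic, R ic.1 (sval ic.2) (g ic).1 (sval (g ic).2).
  apply: (choice (fun ic (p : O * {c | P c}) => R ic.1 (sval ic.2) p.1 (sval p.2))).
  move=> [i [c Pc]]; have [o [c' [Pc' Rc]]] := next i c Pc.
  by exists (o, exist P c' Pc').
pose fix run (j : nat) : {c | P c} :=
  if j is j'.+1 then (g (T + j'%:Z, run j')).2 else exist P c0 P_c0.
exists (fun i => sval (run (absz (i - T)%R))), (fun i => (g (i, run (absz (i - T)%R))).1).
split=> [|i Ti]; first by rewrite subrr.
split; first exact: svalP.
have -> : absz (i + 1 - T)%R = (absz (i - T)%R).+1 by lia.
rewrite /= (_ : T + _ = i); last by lia.
exact: (Rg (i, _)).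
Qed.

Lemma run_invariant (P : S -> Prop) (t T : int) (s : int -> S) (o : int -> O) :
  (forall i c o' c', R i c o' c' -> P c -> P c') ->
  (forall i, t <= i -> i < T -> R i (s i) (o i) (s (i + 1))) ->
  P (s t) -> forall i, t <= i <= T -> P (s i).
Proof.
move=> pres steps P_st.
suff P_run j : t + j%:Z <= T -> P (s (t + j%:Z)).
  move=> i /andP[ti iT]; have := P_run (absz (i - t)%R).
  by rewrite (_ : t + _ = i); [apply | lia..].
elim: j => [|j IH] jT; first by rewrite addr0.
rewrite (_ : t + j.+1%:Z = t + j%:Z + 1); last by lia.
by apply: (pres _ (s (t + j%:Z)) (o (t + j%:Z))); [apply: steps | apply: IH]; lia.
Qed.

End Runs.

Section Computations.
Variable k : fieldType.
Implicit Types (f : circ k) (s : int -> circ k) (u v : int -> seq k).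

Lemma run_init f t T s u v :
  init (s t) = f ->
  (forall i, t <= i -> i < T -> step i (s i) (u i) (v i) (s (i + 1))) ->
  forall i, t <= i <= T -> init (s i) = f.
Proof.
move=> init_st steps.
apply: (run_invariant (R := fun i c (uv : seq k * seq k) c' => step i c uv.1 uv.2 c')
                      (o := fun i => (u i, v i)) (P := fun c => init c = f)) => //.
by move=> i c uv c' /step_init ->.
Qed.

Lemma fin_comp_extend f n m t len s u v :
  asfg f n m -> fin_comp f t len s u v ->
  exists s' u' v', inf_comp f t s' u' v' /\
    forall i, t <= i -> i < t + len%:Z -> u' i = u i /\ v' i = v i.
Proof.
move=> asfg_f [t_le0 [s_t steps]].
have tT : t <= t + len%:Z by lia.
move: (t + len%:Z) tT steps => T tT steps.
have init_sT : init (s T) = f.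
  apply: (run_init _ steps); first by rewrite s_t !(asfg_init asfg_f).
  by rewrite tT lexx.
have next i c : init c = f -> exists o c', init c' = f /\ step i c (zeros k n) o c'.
  move=> init_c; have [o [c' st]] := asfg_progress asfg_f i init_c (size_nseq n (0 : k)).
  by exists o, c'; rewrite (step_init st).
have [e [w [e_T run]]] := run_forever T next init_sT.
exists (fun i => if i < T then s i else e i),
       (fun i => if i < T then u i else zeros k n),
       (fun i => if i < T then v i else w i).
split=> [|i ti iT]; last by rewrite iT.
do 2 (split=> //).
- case: ifP => // /negbT Tt.
  have T_t : T = t by lia.
  by subst T; rewrite e_T.
move=> i ti; case: ifP => iT.
  case: ifP => [_|/negbT iT1]; first exact: steps.
  have i1_T : i + 1 = T by lia.
  by rewrite i1_T e_T -i1_T; exact: steps.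
rewrite (_ : (i + 1 < T) = false); last by lia.
by have [] := run i ltac:(lia).
Qed.

Lemma inf_comp_op_sem f n m t s u v :
  asfg f n m -> inf_comp f t s u v ->
  op_sem n m f (fun i => if i < t then (zeros k n, zeros k m) else (u i, v i)).
Proof.
move=> asfg_f [t_le0 [s_t steps]].
have init_s i : t <= i -> init (s i) = f.
  move=> ti; apply: (run_init (T := i) _ (fun j tj _ => steps j tj)).
    by rewrite s_t !(asfg_init asfg_f).
  by rewrite ti lexx.
split; last first.
  exists t, s, u, v; split=> // i; split=> [ti|it]; last by rewrite it.
  by rewrite ifF //; lia.
split; last by exists (t - 1) => i it; rewrite ifT //; lia.
move=> i; case: ifP => [_|/negbT]; first by rewrite !size_nseq.
rewrite -leNgt => ti; exact: asfg_step_size asfg_f (init_s i ti) (steps i ti).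
Qed.

End Computations.

Theorem proposition9 (k : fieldType) (f : circ k) (n m : nat) :
  asfg f n m ->
  forall (t : int) (len : nat) (s : int -> circ k) (u v : int -> seq k),
    fin_comp f t len s u v ->
    exists sigma : int -> seq k * seq k,
      op_sem n m f sigma /\
      forall i : int, t <= i -> i < t + len%:Z -> sigma i = (u i, v i).
Proof.
move=> asfg_f t len s u v comp.
have [s' [u' [v' [comp' agree]]]] := fin_comp_extend asfg_f comp.
exists (fun i => if i < t then (zeros k n, zeros k m) else (u' i, v' i)).
split; first exact: inf_comp_op_sem asfg_f comp'.
by move=> i ti iT; have [<- <-] := agree i ti iT; rewrite ltNge ti.
Qed.
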